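(* (i) Each geodesic triangle $\Delta_X$ (with vertices three distinct cusps in $\mathbb{P}^1(K)$) lies either on a holomorphic curve or on an anti-holomorphic curve in $\mathbb{H}^2$. (ii) Each geodesic forming a side of a geodesic triangle $\Delta_X$ belongs both to a holomorphic curve and to an anti-holomorphic curve in $\mathbb{H}^2$.
   Context: $K=\mathbb{Q}(\sqrt d)$ is a real quadratic field with two real embeddings $x\mapsto x_1,x_2$. For $\gamma=\begin{pmatrix}a&b\\c&d\end{pmatrix}\in GL_2(K)$ let $\gamma_1,\gamma_2$ be its two real embeddings. $GL_2(K)$ acts on $\mathbb{H}^2=\mathbb{H}\times\mathbb{H}$ (and on the cusps $\mathbb{P}^1(K)$) by: if $\det\gamma_1>0,\det\gamma_2>0$, $\gamma z=(\gamma_1z_1,\gamma_2z_2)$ (Möbius transformations); if $\det\gamma_1<0,\det\gamma_2<0$, $\gamma z=\big(-\frac{a_1\bar z_1+b_1}{c_1\bar z_1+d_1},-\frac{a_2\bar z_2+b_2}{c_2\bar z_2+d_2}\big)$; if $\det\gamma_1>0,\det\gamma_2<0$, $\gamma z=\big(\frac{a_1z_1+b_1}{c_1z_1+d_1},-\frac{a_2\bar z_2+b_2}{c_2\bar z_2+d_2}\big)$ (and symmetrically in the other mixed case). Let $\Delta$ be the image of the diagonal map $\mathbb{H}\to\mathbb{H}^2$, $x\mapsto(x,x)$; its boundary contains $0,1,\infty$. Given three distinct cusps $z_0,z_1,z_\infty$, let $\gamma\in PGL_2(K)$ be the unique element sending them to $0,1,\infty$, let $X=\gamma^*\Delta=\gamma^{-1}(\Delta)$,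 and let the geodesic triangle $\Delta_X$ be the preimage under $\gamma$ of the geodesic triangle in $\Delta\cong\mathbb{H}$ with vertices $0,1,\infty$. An anti-holomorphic curve in $\mathbb{H}^2$ is a curve that is holomorphic after replacing the complex structure of one of the two factors $\mathbb{H}$ by its conjugate (e.g. $z_1=-\bar z_2$). *)

From Stdlib Require Import Reals QArith Qreals.
From Coquelicot Require Import Coquelicot.

(* d : Z with 0 < d and d not a perfect square.  An element (a, b) : Q * Q
   represents a + b sqrt(d).  Equality is componentwise Qeq. *)
Definition Kel : Type := (Q * Q)%type.
Definition Kzero : Kel := (0%Q, 0%Q).
Definition Kone : Kel := (1%Q, 0%Q).
Definition Kadd (x y : Kel) : Kel := (Qplus (fst x) (fst y), Qplus (snd x) (snd y)).
Definition Kopp (x : Kel) : Kel := (Qopp (fst x), Qopp (snd x)).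
Definition Ksub (x y : Kel) : Kel := Kadd x (Kopp y).
Definition Kmul (d : Z) (x y : Kel) : Kel :=
  ((fst x * fst y + inject_Z d * (snd x * snd y))%Q,
   (fst x * snd y + snd x * fst y)%Q).
Definition Keq (x y : Kel) : Prop := Qeq (fst x) (fst y) /\ Qeq (snd x) (snd y).

Definition emb1 (d : Z) (x : Kel) : R := (Q2R (fst x) + Q2R (snd x) * sqrt (IZR d))%R.
Definition emb2 (d : Z) (x : Kel) : R := (Q2R (fst x) - Q2R (snd x) * sqrt (IZR d))%R.

Record mat2 : Type := Mat2 { ma : Kel; mb : Kel; mc : Kel; md : Kel }.
Definition Kdet (d : Z) (g : mat2) : Kel :=
  Ksub (Kmul d (ma g) (md g)) (Kmul d (mb g) (mc g)).

(* a cusp (x : y) in P^1(K), represented by a nonzero vector (x, y) *)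
Definition cusp : Type := (Kel * Kel)%type.
Definition is_cusp (c : cusp) : Prop := ~ (Keq (fst c) Kzero /\ Keq (snd c) Kzero).
Definition cusp_distinct (d : Z) (c c' : cusp) : Prop :=
  ~ Keq (Ksub (Kmul d (fst c) (snd c')) (Kmul d (snd c) (fst c'))) Kzero.
Definition cusp_act (d : Z) (g : mat2) (c : cusp) : cusp :=
  (Kadd (Kmul d (ma g) (fst c)) (Kmul d (mb g) (snd c)),
   Kadd (Kmul d (mc g) (fst c)) (Kmul d (md g) (snd c))).
Definition cusp_eq (d : Z) (c c' : cusp) : Prop := ~ cusp_distinct d c c'.
Definition cusp0 : cusp := (Kzero, Kone).
Definition cusp1 : cusp := (Kone, Kone).
Definition cuspinf : cusp := (Kone, Kzero).

Definition Hpl (z : C) : Prop := (0 < Im z)%R.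
Local Open Scope C_scope.

Definition real_act (a b c e : R) (z : C) : C :=
  if Rlt_dec 0 (a * e - b * c)%R
  then (RtoC a * z + RtoC b) / (RtoC c * z + RtoC e)
  else (RtoC a * Cconj z + RtoC b) / (RtoC c * Cconj z + RtoC e).

Definition act1 (d : Z) (g : mat2) (z : C) : C :=
  real_act (emb1 d (ma g)) (emb1 d (mb g)) (emb1 d (mc g)) (emb1 d (md g)) z.
Definition act2 (d : Z) (g : mat2) (z : C) : C :=
  real_act (emb2 d (ma g)) (emb2 d (mb g)) (emb2 d (mc g)) (emb2 d (md g)) z.

Definition tri01inf (x : C) : Prop :=
  Hpl x /\ (0 <= Re x <= 1)%R /\ (1/2 <= Cmod (x - RtoC (1/2)))%R.
Definition side_0inf (x : C) : Prop := Hpl x /\ Re x = 0%R.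
Definition side_1inf (x : C) : Prop := Hpl x /\ Re x = 1%R.
Definition side_01 (x : C) : Prop := Hpl x /\ Cmod (x - RtoC (1/2)) = (1/2)%R.

(* preimage under g of the image in the diagonal Delta of a subset S of H *)
Definition pull_diag (d : Z) (g : mat2) (S : C -> Prop) (z1 z2 : C) : Prop :=
  Hpl z1 /\ Hpl z2 /\ act1 d g z1 = act2 d g z2 /\ S (act1 d g z1).

Definition C_holo_at (f : C -> C) (z : C) : Prop :=
  @ex_derive C_AbsRing C_NormedModule f z.

(* holomorphic on H^2: jointly continuous and holomorphic in each variable
   (Osgood) *)
Definition holo_H2 (F : C -> C -> C) : Prop :=
  forall z1 z2 : C, Hpl z1 -> Hpl z2 ->
    filterlim (fun p : C * C => F (fst p) (snd p)) (locally (z1, z2))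
      (locally (F z1 z2)) /\
    C_holo_at (fun w => F w z2) z1 /\ C_holo_at (fun w => F z1 w) z2.

Definition on_holo_curve (S : C -> C -> Prop) : Prop :=
  exists F : C -> C -> C, holo_H2 F /\
    (exists w1 w2, Hpl w1 /\ Hpl w2 /\ F w1 w2 <> 0) /\
    (forall z1 z2, S z1 z2 -> Hpl z1 /\ Hpl z2 /\ F z1 z2 = 0).

(* S lies on an anti-holomorphic curve: on a holomorphic curve after
   replacing the complex structure of one factor by its conjugate, i.e.
   after composing that factor with the antiholomorphic bijection
   z |-> - conj z of H *)
Definition on_antiholo_curve (S : C -> C -> Prop) : Prop :=
  on_holo_curve (fun z1 z2 => S z1 (- Cconj z2)) \/
  on_holo_curve (fun z1 z2 => S (- Cconj z1) z2).

(* Write act_i(z) = mob M_i (tau_i z), with M_i a real matrix and tau_i either the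
   identity or the reflection z |-> -conj z, according to the sign of det g_i.  On the
   pulled-back diagonal, mob M_1 (tau_1 z_1) = mob M_2 (tau_2 z_2); clearing
   denominators gives a bilinear relation between tau_1 z_1 and tau_2 z_2 whose
   coefficient determinant is -det M_1 det M_2 <> 0, so the points lie on a holomorphic
   curve when tau_1 = tau_2 and on an anti-holomorphic one otherwise.  Each side of the
   triangle 0, 1, oo is the fixed line of an anti-holomorphic reflection of H; composing
   with it swaps tau_2 for the other choice, so the pulled-back sides lie on curves of
   both kinds. *)

From Stdlib Require Import Reals QArith Qreals Lra Classical.
From Coquelicot Require Import Coquelicot.

Local Open Scope C_scope.

Record rmat : Type := RMat { ra : R; rb : R; rc : R; rd : R }.

Definition rdet (M : rmat) : R := (ra M * rd M - rb M * rc M)%R.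

Definition rmul (M N : rmat) : rmat :=
  RMat (ra M * ra N + rb M * rc N) (ra M * rb N + rb M * rd N)
       (rc M * ra N + rd M * rc N) (rc M * rb N + rd M * rd N).

Definition mob_num (M : rmat) (w : C) : C := RtoC (ra M) * w + RtoC (rb M).
Definition mob_den (M : rmat) (w : C) : C := RtoC (rc M) * w + RtoC (rd M).
Definition mob (M : rmat) (w : C) : C := mob_num M w / mob_den M w.

Lemma Cdiv_0_r (u : C) : u / 0 = 0.
Proof. apply injective_projections; simpl; unfold Rdiv; ring. Qed.

(* Unlike Cdiv_conj, no [v <> 0] is needed: both sides use the same junk inverse of 0. *)
Lemma Cconj_div (u v : C) : Cconj (u / v) = Cconj u / Cconj v.
Proof.
destruct u as [x y], v as [a b]. unfold Cconj, Cdiv, Cmult, Cinv; simpl.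
replace (a * (a * 1) + - b * (- b * 1))%R with (a * (a * 1) + b * (b * 1))%R by ring.
apply injective_projections; simpl; unfold Rdiv; ring.
Qed.

Lemma Cconj_RtoC (r : R) : Cconj (RtoC r) = RtoC r.
Proof. apply injective_projections; simpl; ring. Qed.

Lemma RtoC_neq0 (r : R) : r <> 0%R -> RtoC r <> 0.
Proof. intros Hr K. apply Hr. exact (f_equal fst K). Qed.

Lemma Hpl_neq0 (z : C) : Hpl z -> z <> 0.
Proof. intros Hz ->. unfold Hpl in Hz. simpl in Hz. lra. Qed.

Definition mirror (z : C) : C := - Cconj z.

Lemma mirror_involutive (z : C) : mirror (mirror z) = z.
Proof. unfold mirror. rewrite Copp_conj, Cconj_conj. apply injective_projections; simpl; ring. Qed.

Lemma Hpl_mirror (z : C) : Hpl (mirror z) <-> Hpl z.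
Proof. destruct z as [p q]. unfold Hpl, mirror, Cconj, Copp. simpl. lra. Qed.

Definition twist (s : bool) (z : C) : C := if s then z else mirror z.

Lemma mirror_twist (s : bool) (z : C) : mirror (twist s z) = twist (negb s) z.
Proof. destruct s; simpl; [reflexivity | apply mirror_involutive]. Qed.

Definition mat_mirror (M : rmat) : rmat := RMat (ra M) (- rb M) (- rc M) (rd M).
Definition mat_flip (M : rmat) : rmat := RMat (- ra M) (rb M) (- rc M) (rd M).

Lemma mob_mirror (M : rmat) (w : C) : mirror (mob M w) = mob (mat_mirror M) (mirror w).
Proof.
unfold mirror, mob, mob_num, mob_den, mat_mirror; simpl.
rewrite Cconj_div, !Cplus_conj, !Cmult_conj, !Cconj_RtoC, !RtoC_opp.
replace (- RtoC (rc M) * - Cconj w + RtoC (rd M))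
  with (RtoC (rc M) * Cconj w + RtoC (rd M)) by ring.
unfold Cdiv. ring.
Qed.

Lemma mob_mat_flip (M : rmat) (w : C) : mob (mat_flip M) (mirror w) = mob M (Cconj w).
Proof.
unfold mirror, mob, mob_num, mob_den, mat_flip; simpl. rewrite !RtoC_opp.
f_equal; ring.
Qed.

Lemma Im_mob (M : rmat) (p q : R) :
  Im (mob M (p, q)) =
  (rdet M * q / ((rc M * p + rd M) * (rc M * p + rd M) + (rc M * q) * (rc M * q)))%R.
Proof.
unfold mob, mob_num, mob_den, rdet, Cdiv, Cmult, Cplus, Cinv, RtoC, Im; simpl.
replace ((rc M * p - 0 * q + rd M) * ((rc M * p - 0 * q + rd M) * 1)
         + (rc M * q + 0 * p + 0) * ((rc M * q + 0 * p + 0) * 1))%R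
  with ((rc M * p + rd M) * (rc M * p + rd M) + (rc M * q) * (rc M * q))%R by ring.
unfold Rdiv. ring.
Qed.

Lemma mob_Hpl_rdet (M : rmat) (w : C) : Hpl (mob M w) -> rdet M <> 0%R.
Proof.
intros Hw Hdet. destruct w as [p q]. unfold Hpl in Hw.
rewrite Im_mob, Hdet in Hw. unfold Rdiv in Hw. lra.
Qed.

Lemma mob_den_neq0 (M : rmat) (w : C) : mob M w <> 0 -> mob_den M w <> 0.
Proof. intros Hw Hden. apply Hw. unfold mob. rewrite Hden. apply Cdiv_0_r. Qed.

Lemma mob_rmul (M N : rmat) (w : C) :
  mob_den N w <> 0 -> mob M (mob N w) = mob (rmul M N) w.
Proof.
intros HN.
assert (Enum : mob_num (rmul M N) w = mob_num M (mob N w) * mob_den N w).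
{ unfold mob, mob_num, mob_den, rmul in *; simpl. rewrite !RtoC_plus, !RtoC_mult.
  field. exact HN. }
assert (Eden : mob_den (rmul M N) w = mob_den M (mob N w) * mob_den N w).
{ unfold mob, mob_num, mob_den, rmul in *; simpl. rewrite !RtoC_plus, !RtoC_mult.
  field. exact HN. }
unfold mob at 1 3. rewrite Enum, Eden.
destruct (classic (mob_den M (mob N w) = 0)) as [HM | HM].
- rewrite HM, Cmult_0_l, !Cdiv_0_r. reflexivity.
- field. split; assumption.
Qed.

Definition det_pos (M : rmat) : bool := if Rlt_dec 0 (rdet M) then true else false.
Definition act_mat (M : rmat) : rmat := if Rlt_dec 0 (rdet M) then M else mat_flip M.

Lemma real_act_twist (M : rmat) (z : C) :
  real_act (ra M) (rb M) (rc M) (rd M) z = mob (act_mat M) (twist (det_pos M) z).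
Proof.
unfold real_act, act_mat, det_pos, rdet.
destruct Rlt_dec; simpl; [reflexivity | symmetry; apply mob_mat_flip].
Qed.

Definition bil (p q r s : C) (z1 z2 : C) : C := p * z1 * z2 + q * z1 + r * z2 + s.

Lemma continuous_C_AbsRing {U : UniformSpace} (f : U -> C) (x : U) :
  @continuous U C_UniformSpace f x -> @continuous U (AbsRing_UniformSpace C_AbsRing) f x.
Proof. intros Hf P HP. apply Hf. apply locally_C. exact HP. Qed.

Lemma continuous_Cmult {U : UniformSpace} (f g : U -> C) (x : U) :
  @continuous U C_UniformSpace f x -> @continuous U C_UniformSpace g x ->
  @continuous U C_UniformSpace (fun y => f y * g y) x.
Proof.
intros Hf Hg. apply (@continuous_scal _ C_AbsRing C_NormedModule); [|exact Hg].
apply continuous_C_AbsRing, Hf.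
Qed.

Lemma continuous_Cplus {U : UniformSpace} (f g : U -> C) (x : U) :
  @continuous U C_UniformSpace f x -> @continuous U C_UniformSpace g x ->
  @continuous U C_UniformSpace (fun y => f y + g y) x.
Proof. apply (@continuous_plus _ C_AbsRing C_NormedModule). Qed.

Lemma C_holo_affine (p q z : C) : C_holo_at (fun w => p * w + q) z.
Proof.
unfold C_holo_at.
apply (ex_derive_ext (fun w => @plus C_NormedModule (@scal C_AbsRing C_NormedModule w p) q)).
- intros w. change (w * p + q = p * w + q). ring.
- apply ex_derive_plus; [apply (ex_derive_scal_l (fun w => w)), ex_derive_id | apply ex_derive_const].
Qed.

Lemma holo_H2_bil (p q r s : C) : holo_H2 (bil p q r s).
Proof.
intros z1 z2 _ _. split; [|split].
- change (@continuous (prod_UniformSpace C_UniformSpace C_UniformSpace) C_UniformSpace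
    (fun y : C * C => bil p q r s (fst y) (snd y)) (z1, z2)).
  unfold bil.
  apply continuous_Cplus; [apply continuous_Cplus; [apply continuous_Cplus|]|];
    try apply continuous_Cmult; try apply continuous_Cmult;
    first [apply continuous_const | apply continuous_fst | apply continuous_snd].
- apply (ex_derive_ext (fun w => (p * z2 + q) * w + (r * z2 + s))).
  + intros w. change ((p * z2 + q) * w + (r * z2 + s) = bil p q r s w z2). unfold bil. ring.
  + apply C_holo_affine.
- apply (ex_derive_ext (fun w => (p * z1 + r) * w + (q * z1 + s))).
  + intros w. change ((p * z1 + r) * w + (q * z1 + s) = bil p q r s z1 w). unfold bil. ring.
  + apply C_holo_affine.
Qed.

Lemma affine_eq0 (p q x y : C) : p * x + q = 0 -> p * y + q = 0 -> x <> y -> p = 0 /\ q = 0.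
Proof.
intros Hx Hy Hxy.
assert (Hp : p = 0).
{ replace p with ((p * x + q - (p * y + q)) / (x - y))
    by (field; apply Cminus_eq_contra, Hxy).
  rewrite Hx, Hy. unfold Cdiv. ring. }
split; [exact Hp|]. rewrite Hp in Hx. rewrite <- Hx. ring.
Qed.

Lemma bil_nonzero_on_H2 (p q r s : C) :
  q * r - p * s <> 0 -> exists w1 w2, Hpl w1 /\ Hpl w2 /\ bil p q r s w1 w2 <> 0.
Proof.
intros Hnd. apply NNPP. intros Hnone.
assert (Hzero : forall w1 w2, Hpl w1 -> Hpl w2 -> bil p q r s w1 w2 = 0).
{ intros w1 w2 H1 H2. apply NNPP. intro Hw. apply Hnone. exists w1, w2. auto. }
set (i := (0%R, 1%R) : C). set (j := (0%R, 2%R) : C).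
assert (Hi : Hpl i) by (unfold Hpl, i; simpl; lra).
assert (Hj : Hpl j) by (unfold Hpl, j; simpl; lra).
assert (Hij : i <> j) by (unfold i, j; intro K; injection K; lra).
(* bil is affine in its second variable, so vanishing at i and j kills both coefficients *)
assert (Hslice : forall w, Hpl w -> p * w + r = 0 /\ q * w + s = 0).
{ intros w Hw. apply (affine_eq0 _ _ i j); [| |exact Hij].
  - rewrite <- (Hzero w i Hw Hi). unfold bil. ring.
  - rewrite <- (Hzero w j Hw Hj). unfold bil. ring. }
destruct (Hslice i Hi) as [Hpi Hqi], (Hslice j Hj) as [Hpj Hqj].
destruct (affine_eq0 p r i j Hpi Hpj Hij) as [-> ->].
destruct (affine_eq0 q s i j Hqi Hqj Hij) as [-> ->].
apply Hnd. ring.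
Qed.

Definition cross (M N : rmat) : C -> C -> C :=
  bil (RtoC (ra M * rc N - ra N * rc M)) (RtoC (ra M * rd N - rb N * rc M))
      (RtoC (rb M * rc N - ra N * rd M)) (RtoC (rb M * rd N - rb N * rd M)).

Lemma cross_eq (M N : rmat) (z1 z2 : C) :
  cross M N z1 z2 = mob_num M z1 * mob_den N z2 - mob_num N z2 * mob_den M z1.
Proof. unfold cross, bil, mob_num, mob_den. rewrite !RtoC_minus, !RtoC_mult. ring. Qed.

Lemma cross_mob_eq (M N : rmat) (z1 z2 : C) :
  mob M z1 = mob N z2 -> mob M z1 <> 0 -> cross M N z1 z2 = 0.
Proof.
intros E Hx.
assert (HM := mob_den_neq0 M z1 Hx).
assert (HN := mob_den_neq0 N z2 ltac:(rewrite <- E; exact Hx)).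
rewrite cross_eq.
assert (Enum : mob_num M z1 = mob M z1 * mob_den M z1) by (unfold mob; field; exact HM).
assert (Enum' : mob_num N z2 = mob N z2 * mob_den N z2) by (unfold mob; field; exact HN).
rewrite Enum, Enum', E. ring.
Qed.

Lemma cross_nonzero_on_H2 (M N : rmat) :
  rdet M <> 0%R -> rdet N <> 0%R -> exists w1 w2, Hpl w1 /\ Hpl w2 /\ cross M N w1 w2 <> 0.
Proof.
intros HM HN. apply bil_nonzero_on_H2.
rewrite <- !RtoC_mult, <- RtoC_minus. apply RtoC_neq0.
replace (_ - _)%R with (- (rdet M * rdet N))%R by (unfold rdet; ring).
apply Ropp_neq_0_compat, Rmult_integral_contrapositive. split; assumption.
Qed.

Lemma on_holo_curve_of_mob_eq (M N : rmat) (Q : C -> C -> Prop) :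
  (forall z1 z2, Q z1 z2 -> Hpl z1 /\ Hpl z2 /\ Hpl (mob M z1) /\ mob M z1 = mob N z2) ->
  on_holo_curve Q.
Proof.
intros HQ.
destruct (classic (exists z1 z2, Q z1 z2)) as [(z1 & z2 & Hq) | Hempty].
- destruct (HQ z1 z2 Hq) as (_ & _ & Hx & E).
  exists (cross M N). split; [apply holo_H2_bil | split].
  + apply cross_nonzero_on_H2; [exact (mob_Hpl_rdet _ _ Hx)|].
    rewrite E in Hx. exact (mob_Hpl_rdet _ _ Hx).
  + intros w1 w2 Hw. destruct (HQ w1 w2 Hw) as (H1 & H2 & Hy & Ey).
    repeat split; try assumption. apply cross_mob_eq; [exact Ey | apply Hpl_neq0, Hy].
- exists (bil 0 1 1 0). split; [apply holo_H2_bil | split].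
  + apply bil_nonzero_on_H2. replace (1 * 1 - 0 * 0) with (1 : C) by ring. apply C1_nz.
  + intros w1 w2 Hw. exfalso. apply Hempty. exists w1, w2. exact Hw.
Qed.

Definition linked (M N : rmat) (s t : bool) (z1 z2 : C) : Prop :=
  Hpl (mob M (twist s z1)) /\ mob M (twist s z1) = mob N (twist t z2).

Lemma linked_mirror (M N : rmat) (s t : bool) (z1 z2 : C) :
  linked M N s t z1 z2 -> linked (mat_mirror M) (mat_mirror N) (negb s) (negb t) z1 z2.
Proof.
intros [Hx E]. unfold linked.
rewrite <- !mirror_twist, <- !mob_mirror, <- E.
split; [apply Hpl_mirror, Hx | reflexivity].
Qed.

Lemma on_curves_of_linked (M N : rmat) (s t : bool) (Q : C -> C -> Prop) :
  (forall z1 z2, Q z1 z2 -> Hpl z1 /\ Hpl z2 /\ linked M N s t z1 z2) ->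
  (s = t -> on_holo_curve Q) /\ (s <> t -> on_antiholo_curve Q).
Proof.
intros HQ.
destruct s, t; split; intros Hst; try congruence.
- apply (on_holo_curve_of_mob_eq M N), HQ.
- left. apply (on_holo_curve_of_mob_eq M N).
  intros z1 z2 Hq. destruct (HQ _ _ Hq) as (H1 & H2 & Hx & E).
  change (- Cconj z2) with (mirror z2) in *. unfold twist in E.
  rewrite mirror_involutive in E.
  repeat split; try assumption. apply Hpl_mirror, H2.
- right. apply (on_holo_curve_of_mob_eq M N).
  intros z1 z2 Hq. destruct (HQ _ _ Hq) as (H1 & H2 & Hx & E).
  change (- Cconj z1) with (mirror z1) in *. unfold twist in Hx, E.
  rewrite mirror_involutive in Hx, E.
  repeat split; try assumption. apply Hpl_mirror, H1.
- apply (on_holo_curve_of_mob_eq (mat_mirror M) (mat_mirror N)).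
  intros z1 z2 Hq. destruct (HQ _ _ Hq) as (H1 & H2 & L).
  repeat split; try assumption; apply (linked_mirror _ _ _ _ _ _ L).
Qed.

Lemma linked_reflect (M N P : rmat) (s t : bool) (z1 z2 : C) :
  linked M N s t z1 z2 ->
  mob M (twist s z1) = mob P (mirror (mob M (twist s z1))) ->
  linked M (rmul P (mat_mirror N)) s (negb t) z1 z2.
Proof.
intros [Hx E] Hfix. split; [exact Hx|].
assert (Emirror : mirror (mob M (twist s z1)) = mob (mat_mirror N) (twist (negb t) z2))
  by (rewrite E, mob_mirror, mirror_twist; reflexivity).
rewrite <- mob_rmul, <- Emirror; [exact Hfix|].
apply mob_den_neq0. rewrite <- Emirror. apply Hpl_neq0, Hpl_mirror, Hx.
Qed.

Lemma on_both_curves_of_linked_fixed (M N P : rmat) (s t : bool) (Q : C -> C -> Prop) :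
  (forall z1 z2, Q z1 z2 -> Hpl z1 /\ Hpl z2 /\ linked M N s t z1 z2 /\
     mob M (twist s z1) = mob P (mirror (mob M (twist s z1)))) ->
  on_holo_curve Q /\ on_antiholo_curve Q.
Proof.
intros HQ.
destruct (on_curves_of_linked M N s t Q) as [Hh Ha].
{ intros z1 z2 Hq. destruct (HQ _ _ Hq) as (H1 & H2 & L & _). auto. }
destruct (on_curves_of_linked M (rmul P (mat_mirror N)) s (negb t) Q) as [Hh' Ha'].
{ intros z1 z2 Hq. destruct (HQ _ _ Hq) as (H1 & H2 & L & Hfix).
  repeat split; try assumption; apply (linked_reflect _ _ _ _ _ _ _ L Hfix). }
destruct s, t; simpl in *; split;
  solve [apply Hh; congruence | apply Ha; congruence | apply Hh'; congruence | apply Ha'; congruence].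
Qed.

Lemma mob_eq_of_mul (M : rmat) (w x : C) :
  mob_den M w <> 0 -> x * mob_den M w = mob_num M w -> x = mob M w.
Proof. intros Hden E. unfold mob. rewrite <- E. field. exact Hden. Qed.

Lemma side_0inf_fixed (x : C) : side_0inf x -> x = mob (RMat 1 0 0 1) (mirror x).
Proof.
destruct x as [p q]. intros [_ Hre]. simpl in Hre.
apply mob_eq_of_mul; unfold mob_den, mob_num, mirror, Cconj; simpl.
- intro K. apply (f_equal fst) in K. simpl in K. lra.
- apply injective_projections; simpl; lra.
Qed.

Lemma side_1inf_fixed (x : C) : side_1inf x -> x = mob (RMat 1 2 0 1) (mirror x).
Proof.
destruct x as [p q]. intros [_ Hre]. simpl in Hre.
apply mob_eq_of_mul; unfold mob_den, mob_num, mirror, Cconj; simpl.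
- intro K. apply (f_equal fst) in K. simpl in K. lra.
- apply injective_projections; simpl; lra.
Qed.

Lemma side_01_fixed (x : C) : side_01 x -> x = mob (RMat 1 0 2 1) (mirror x).
Proof.
destruct x as [p q]. intros [Hq Hmod]. unfold Hpl in Hq. simpl in Hq.
pose proof (Cmod2_alt ((p, q) - RtoC (1/2))) as Hcircle.
rewrite Hmod in Hcircle. simpl in Hcircle.
apply mob_eq_of_mul; unfold mob_den, mob_num, mirror, Cconj; simpl.
- intro K. apply (f_equal snd) in K. simpl in K. lra.
- apply injective_projections; simpl; nra.
Qed.

Definition emb_mat (emb : Kel -> R) (g : mat2) : rmat :=
  RMat (emb (ma g)) (emb (mb g)) (emb (mc g)) (emb (md g)).

Lemma pull_diag_linked (d : Z) (g : mat2) (S : C -> Prop) (z1 z2 : C) :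
  (forall x, S x -> Hpl x) -> pull_diag d g S z1 z2 ->
  let M1 := emb_mat (emb1 d) g in
  let M2 := emb_mat (emb2 d) g in
  Hpl z1 /\ Hpl z2 /\ linked (act_mat M1) (act_mat M2) (det_pos M1) (det_pos M2) z1 z2 /\
  S (mob (act_mat M1) (twist (det_pos M1) z1)).
Proof.
intros HS (H1 & H2 & E & Hx) M1 M2. unfold linked.
rewrite <- (real_act_twist M1), <- (real_act_twist M2).
change (real_act (ra M1) (rb M1) (rc M1) (rd M1) z1) with (act1 d g z1).
change (real_act (ra M2) (rb M2) (rc M2) (rd M2) z2) with (act2 d g z2).
repeat split; auto.
Qed.

Theorem lemma3p1 (d : Z) (hd : (0 < d)%Z) (hsq : forall n : Z, (n * n)%Z <> d)
  (z0 z1 zinf : cusp)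
  (h0 : is_cusp z0) (h1 : is_cusp z1) (hinf : is_cusp zinf)
  (h01 : cusp_distinct d z0 z1) (h0inf : cusp_distinct d z0 zinf)
  (h1inf : cusp_distinct d z1 zinf)
  (g : mat2) (hg : ~ Keq (Kdet d g) Kzero)
  (hg0 : cusp_eq d (cusp_act d g z0) cusp0)
  (hg1 : cusp_eq d (cusp_act d g z1) cusp1)
  (hginf : cusp_eq d (cusp_act d g zinf) cuspinf) :
  (on_holo_curve (pull_diag d g tri01inf) \/
   on_antiholo_curve (pull_diag d g tri01inf)) /\
  (forall side : C -> Prop,
     side = side_0inf \/ side = side_1inf \/ side = side_01 ->
     on_holo_curve (pull_diag d g side) /\
     on_antiholo_curve (pull_diag d g side)).
Proof.
set (M1 := emb_mat (emb1 d) g). set (M2 := emb_mat (emb2 d) g).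
split.
- destruct (on_curves_of_linked (act_mat M1) (act_mat M2) (det_pos M1) (det_pos M2)
              (pull_diag d g tri01inf)) as [Hholo Hanti].
  { intros y1 y2 Hy. destruct (pull_diag_linked d g tri01inf y1 y2 (fun x Hx => proj1 Hx) Hy)
      as (H1 & H2 & L & _). auto. }
  destruct (Bool.bool_dec (det_pos M1) (det_pos M2)); [left; apply Hholo | right; apply Hanti];
    assumption.
- intros side Hside.
  assert (Hfixed : exists P, forall x, side x -> Hpl x /\ x = mob P (mirror x)).
  { destruct Hside as [-> | [-> | ->]]; eexists; intros x Hx; split;
      solve [apply Hx | apply side_0inf_fixed, Hx | apply side_1inf_fixed, Hx
            | apply side_01_fixed, Hx]. }
  destruct Hfixed as [P HP].
  apply (on_both_curves_of_linked_fixed (act_mat M1) (act_mat M2) P (det_pos M1) (det_pos M2)).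
  intros y1 y2 Hy.
  destruct (pull_diag_linked d g side y1 y2 (fun x Hx => proj1 (HP x Hx)) Hy)
    as (H1 & H2 & L & Hs).
  split; [exact H1 | split; [exact H2 | split; [exact L | exact (proj2 (HP _ Hs))]]].
Qed.
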